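(* Let $g(x,\omega)=c_1\chi\omega(1-\omega)(\bar r\,\bar\tau(x))^2+c_2(1-\omega)\bar r\,\bar\tau(x)+\bar r\alpha$, and define $R_\tau(\omega,x)=(1-2\omega)\bar r\,\bar\tau(x)$, $R_c=\dfrac{c_2}{c_1\chi}$, $\omega_i=\dfrac12-\dfrac{c_2(\tau_D-\tau_C)}{2c_1\lambda_0\tau_i\chi}$ for $i\in\{C,D\}$, and $\tilde x(\omega)=\dfrac{\tau_D}{\tau_D-\tau_C}-\dfrac{c_2}{c_1\lambda_0\chi(1-2\omega)}$. Then: (a) if $R_\tau(0,0)<R_c$, then $\partial g/\partial\omega<0$ for all $x\in(0,1)$ and all $\omega\in(0,1)$; (b) if $R_\tau(0,1)<R_c<R_\tau(0,0)$, then (1) for $\omega\in(0,\omega_D)$: $\partial g/\partial\omega>0$ for $x\in(0,\tilde x(\omega))$ and $\partial g/\partial\omega<0$ for $x\in(\tilde x(\omega),1)$; (2) for $\omega\in(\omega_D,1)$: $\partial g/\partial\omega<0$ for all $x\in(0,1)$; (c) if $R_\tau(0,1)>R_c$, then (1) for $\omega\in(0,\omega_C)$: $\partial g/\partial\omega>0$ for all $x\in(0,1)$; (2) for $\omega\in(\omega_C,\omega_D)$: $\partial g/\partial\omega>0$ for $x\in(0,\tilde x(\omega))$ and $\partial g/\partial\omega<0$ for $x\in(\tilde x(\omega),1)$; (3) for $\omega\in(\omega_D,1)$: $\partial g/\partial\omega<0$ for all $x\in(0,1)$.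
   Context: Parameters: $\lambda_0>0$, $\tau_D>\tau_C\ge 0$, $\alpha\in[0,1]$, $\sigma\in[0,1)$, $\gamma\in[0,1)$, $d>0$, $c_1>0$, $c_2\ge 0$. $\bar\tau(x)=\tau_Cx+\tau_D(1-x)$, $\bar r=\lambda_0/(\tau_D-\tau_C)$, $\chi=(d/(1-\sigma))^{1/(1-\gamma)}$. *)

From Stdlib Require Import Reals Lra.
From Coquelicot Require Import Coquelicot.
Open Scope R_scope.

Definition tau_bar (tauC tauD x : R) : R := tauC * x + tauD * (1 - x).

Definition r_bar (lambda0 tauC tauD : R) : R := lambda0 / (tauD - tauC).

Definition chi (d sigma gamma : R) : R := Rpower (d / (1 - sigma)) (1 / (1 - gamma)).

Definition g (lambda0 tauC tauD alpha sigma gamma d c1 c2 : R) (x omega : R) : R :=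
  let rt := r_bar lambda0 tauC tauD * tau_bar tauC tauD x in
  c1 * chi d sigma gamma * omega * (1 - omega) * rt ^ 2
  + c2 * (1 - omega) * rt + r_bar lambda0 tauC tauD * alpha.

Definition dg_domega (lambda0 tauC tauD alpha sigma gamma d c1 c2 : R) (x omega : R) : R :=
  Derive (fun w => g lambda0 tauC tauD alpha sigma gamma d c1 c2 x w) omega.

Definition R_tau (lambda0 tauC tauD : R) (omega x : R) : R :=
  (1 - 2 * omega) * r_bar lambda0 tauC tauD * tau_bar tauC tauD x.

Definition R_c (sigma gamma d c1 c2 : R) : R := c2 / (c1 * chi d sigma gamma).

Definition omega_i (lambda0 tauC tauD sigma gamma d c1 c2 : R) (taui : R) : R :=
  / 2 - c2 * (tauD - tauC) / (2 * c1 * lambda0 * taui * chi d sigma gamma).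

Definition x_tilde (lambda0 tauC tauD sigma gamma d c1 c2 : R) (omega : R) : R :=
  tauD / (tauD - tauC) - c2 / (c1 * lambda0 * chi d sigma gamma * (1 - 2 * omega)).

(** The derivative factors as
    [dg/dw = c1 chi (r_bar tau_bar(x)) (R_tau(w, x) - R_c)], and [r_bar tau_bar(x) > 0]
    for [x < 1], so its sign is that of [R_tau(w, x) - R_c] with
    [R_tau(w, x) = (1 - 2w) r_bar tau_bar(x)].  For fixed [w < 1/2] this is affine and
    decreasing in [x], and for fixed [tau_bar] affine and decreasing in [w]; [x_tilde(w)]
    and [omega_i] are the points where these affine functions cross the level [R_c].
    The three regimes only differ in where [omega_C] and [omega_D] fall:
    [R_tau(0,0) < R_c] means [omega_D < 0], and [R_c < R_tau(0,1)] means [omega_C > 0]. *)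
From Stdlib Require Import Reals Lra.
From Coquelicot Require Import Coquelicot.
Open Scope R_scope.

Lemma lt_linear_root_iff (p q c y : R) : 0 < q -> (y < (p - c) / q <-> c < p - q * y).
Proof. intros Hq. rewrite <- Rlt_div_r by exact Hq. lra. Qed.

Lemma linear_root_lt_iff (p q c y : R) : 0 < q -> ((p - c) / q < y <-> p - q * y < c).
Proof. intros Hq. rewrite Rlt_div_l by exact Hq. lra. Qed.

Lemma chi_pos (d sigma gamma : R) : 0 < chi d sigma gamma.
Proof. apply exp_pos. Qed.

Lemma tau_bar_gt (tauC tauD x : R) : tauC < tauD -> x < 1 -> tauC < tau_bar tauC tauD x.
Proof. intros HtCD Hx. unfold tau_bar. nra. Qed.

Lemma tau_bar_antitone (tauC tauD x y : R) :
  tauC < tauD -> x <= y -> tau_bar tauC tauD y <= tau_bar tauC tauD x.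
Proof. intros HtCD Hxy. unfold tau_bar. nra. Qed.

Lemma R_tau_at_0 (lambda0 tauC tauD w : R) :
  R_tau lambda0 tauC tauD w 0 = (1 - 2 * w) * r_bar lambda0 tauC tauD * tauD.
Proof. unfold R_tau, tau_bar. ring. Qed.

Lemma R_tau_at_1 (lambda0 tauC tauD w : R) :
  R_tau lambda0 tauC tauD w 1 = (1 - 2 * w) * r_bar lambda0 tauC tauD * tauC.
Proof. unfold R_tau, tau_bar. ring. Qed.

Section Proposition4.

Variables (lambda0 tauC tauD sigma gamma d c1 c2 : R).
Hypotheses (Hl : 0 < lambda0) (HtC : 0 <= tauC) (HtCD : tauC < tauD)
  (Hc1 : 0 < c1) (Hc2 : 0 <= c2).

Local Notation rb := (r_bar lambda0 tauC tauD).
Local Notation tb := (tau_bar tauC tauD).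
Local Notation Rt := (R_tau lambda0 tauC tauD).
Local Notation Rc := (R_c sigma gamma d c1 c2).
Local Notation om := (omega_i lambda0 tauC tauD sigma gamma d c1 c2).
Local Notation xt := (x_tilde lambda0 tauC tauD sigma gamma d c1 c2).
Local Notation dg alpha := (dg_domega lambda0 tauC tauD alpha sigma gamma d c1 c2).

Lemma r_bar_pos : 0 < rb.
Proof. apply Rdiv_lt_0_compat; lra. Qed.

Lemma c1_chi_pos : 0 < c1 * chi d sigma gamma.
Proof. pose proof (chi_pos d sigma gamma). nra. Qed.

Lemma R_c_ge0 : 0 <= Rc.
Proof.
  pose proof c1_chi_pos.
  apply Rmult_le_pos; [lra | left; apply Rinv_0_lt_compat; lra].
Qed.

Lemma rb_tau_bar_pos (x : R) : x < 1 -> 0 < rb * tb x.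
Proof.
  intros Hx. pose proof (tau_bar_gt tauC tauD x HtCD Hx).
  apply Rmult_lt_0_compat; [exact r_bar_pos | lra].
Qed.

Lemma R_tau_antitone (w x y : R) : w <= / 2 -> x <= y -> Rt w y <= Rt w x.
Proof.
  intros Hw Hxy. unfold R_tau.
  apply Rmult_le_compat_l; [apply Rmult_le_pos; [lra | left; exact r_bar_pos] |].
  exact (tau_bar_antitone tauC tauD x y HtCD Hxy).
Qed.

Lemma tauC_pos_of_R_c_lt_R_tau : Rc < Rt 0 1 -> 0 < tauC.
Proof.
  intros H. rewrite R_tau_at_1 in H. pose proof R_c_ge0.
  destruct HtC as [| <-]; [assumption |]. rewrite Rmult_0_r in H. lra.
Qed.

Lemma dg_domega_factor (alpha x w : R) :
  dg alpha x w
  = c1 * chi d sigma gamma * (rb * tb x) * (Rt w x - Rc).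
Proof.
  pose proof (chi_pos d sigma gamma).
  unfold dg_domega, g. apply is_derive_unique. auto_derive; [exact I |].
  unfold R_tau, R_c. field. split; lra.
Qed.

(* [w < 1/2] rather than [x < 1] makes [tau_bar x] positive here, because the interval
   [(0, x_tilde w)] on which this is used may extend beyond 1. *)
Lemma dg_domega_pos (alpha x w : R) :
  w < / 2 -> Rc < Rt w x -> 0 < dg alpha x w.
Proof.
  intros Hw HRt. rewrite dg_domega_factor.
  pose proof c1_chi_pos. pose proof R_c_ge0.
  assert (Hrt : 0 < rb * tb x).
  { unfold R_tau in HRt. nra. }
  apply Rmult_lt_0_compat; [apply Rmult_lt_0_compat |]; lra.
Qed.

Lemma dg_domega_neg (alpha x w : R) :
  x < 1 -> Rt w x < Rc -> dg alpha x w < 0.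
Proof.
  intros Hx HRt. rewrite dg_domega_factor.
  pose proof c1_chi_pos. pose proof (rb_tau_bar_pos x Hx).
  assert (0 < c1 * chi d sigma gamma * (rb * tb x)) by (apply Rmult_lt_0_compat; lra).
  nra.
Qed.

Lemma omega_i_eq (ti : R) : 0 < ti -> om ti = (rb * ti - Rc) / (2 * rb * ti).
Proof.
  intros Hti. pose proof (chi_pos d sigma gamma).
  unfold omega_i, R_c, r_bar. field. repeat split; lra.
Qed.

Lemma omega_i_le_half (ti : R) : 0 < ti -> om ti <= / 2.
Proof.
  intros Hti. pose proof r_bar_pos. pose proof R_c_ge0.
  rewrite omega_i_eq by exact Hti.
  replace ((rb * ti - Rc) / (2 * rb * ti)) with (/ 2 - Rc / (2 * rb * ti))
    by (field; lra).
  assert (0 <= Rc / (2 * rb * ti)) by (apply Rdiv_le_0_compat; nra).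
  lra.
Qed.

Lemma lt_omega_i_iff (ti w : R) : 0 < ti -> (w < om ti <-> Rc < (1 - 2 * w) * rb * ti).
Proof.
  intros Hti. pose proof r_bar_pos.
  rewrite omega_i_eq, lt_linear_root_iff by nra.
  replace (rb * ti - 2 * rb * ti * w) with ((1 - 2 * w) * rb * ti) by ring.
  reflexivity.
Qed.

Lemma omega_i_lt_iff (ti w : R) : 0 < ti -> (om ti < w <-> (1 - 2 * w) * rb * ti < Rc).
Proof.
  intros Hti. pose proof r_bar_pos.
  rewrite omega_i_eq, linear_root_lt_iff by nra.
  replace (rb * ti - 2 * rb * ti * w) with ((1 - 2 * w) * rb * ti) by ring.
  reflexivity.
Qed.

Lemma x_tilde_eq (w : R) :
  w < / 2 -> xt w = (Rt w 0 - Rc) / ((1 - 2 * w) * rb * (tauD - tauC)).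
Proof.
  intros Hw. pose proof (chi_pos d sigma gamma).
  rewrite R_tau_at_0. unfold x_tilde, R_c, r_bar. field. repeat split; lra.
Qed.

Lemma R_tau_affine (w x : R) : Rt w x = Rt w 0 - (1 - 2 * w) * rb * (tauD - tauC) * x.
Proof. rewrite R_tau_at_0. unfold R_tau, tau_bar. ring. Qed.

Lemma lt_x_tilde_iff (w x : R) : w < / 2 -> (x < xt w <-> Rc < Rt w x).
Proof.
  intros Hw. pose proof r_bar_pos.
  rewrite x_tilde_eq, lt_linear_root_iff, <- R_tau_affine by (try apply Rmult_lt_0_compat; nra).
  reflexivity.
Qed.

Lemma x_tilde_lt_iff (w x : R) : w < / 2 -> (xt w < x <-> Rt w x < Rc).
Proof.
  intros Hw. pose proof r_bar_pos.
  rewrite x_tilde_eq, linear_root_lt_iff, <- R_tau_affine by (try apply Rmult_lt_0_compat; nra).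
  reflexivity.
Qed.

Lemma dg_domega_neg_above_omegaD (alpha w : R) :
  om tauD < w ->
  forall x, 0 < x < 1 -> dg alpha x w < 0.
Proof.
  intros Hw x Hx. apply dg_domega_neg; [lra |].
  rewrite omega_i_lt_iff, <- R_tau_at_0 in Hw by lra.
  destruct (Rle_or_lt w (/ 2)) as [Hhalf | Hhalf].
  - pose proof (R_tau_antitone w 0 x Hhalf (Rlt_le _ _ (proj1 Hx))). lra.
  - pose proof (rb_tau_bar_pos x (proj2 Hx)). pose proof R_c_ge0.
    unfold R_tau. nra.
Qed.

Lemma dg_domega_sign_change_below_omegaD (alpha w : R) :
  w < om tauD ->
  (forall x, 0 < x < xt w -> 0 < dg alpha x w) /\
  (forall x, xt w < x < 1 -> dg alpha x w < 0).
Proof.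
  intros Hw.
  assert (Hhalf : w < / 2) by (pose proof (omega_i_le_half tauD (Rle_lt_trans _ _ _ HtC HtCD)); lra).
  split; intros x Hx.
  - apply dg_domega_pos; [exact Hhalf |]. apply lt_x_tilde_iff; lra.
  - apply dg_domega_neg; [lra |]. apply x_tilde_lt_iff; lra.
Qed.

Lemma dg_domega_pos_below_omegaC (alpha w : R) :
  0 < tauC -> w < om tauC ->
  forall x, 0 < x < 1 -> 0 < dg alpha x w.
Proof.
  intros HtC' Hw x Hx.
  assert (Hhalf : w < / 2) by (pose proof (omega_i_le_half tauC HtC'); lra).
  apply dg_domega_pos; [exact Hhalf |].
  rewrite lt_omega_i_iff, <- R_tau_at_1 in Hw by exact HtC'.
  pose proof (R_tau_antitone w x 1 (Rlt_le _ _ Hhalf) (Rlt_le _ _ (proj2 Hx))).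
  lra.
Qed.

End Proposition4.

Theorem proposition4
  (lambda0 tauC tauD alpha sigma gamma d c1 c2 : R)
  (Hl : 0 < lambda0) (HtC : 0 <= tauC) (HtCD : tauC < tauD)
  (Ha : 0 <= alpha <= 1) (Hs : 0 <= sigma < 1) (Hg : 0 <= gamma < 1)
  (Hd : 0 < d) (Hc1 : 0 < c1) (Hc2 : 0 <= c2) :
  let dg := dg_domega lambda0 tauC tauD alpha sigma gamma d c1 c2 in
  let Rt := R_tau lambda0 tauC tauD in
  let Rc := R_c sigma gamma d c1 c2 in
  let wC := omega_i lambda0 tauC tauD sigma gamma d c1 c2 tauC in
  let wD := omega_i lambda0 tauC tauD sigma gamma d c1 c2 tauD in
  let xt := x_tilde lambda0 tauC tauD sigma gamma d c1 c2 in
  (* (a) *)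
  (Rt 0 0 < Rc ->
     forall x w, 0 < x < 1 -> 0 < w < 1 -> dg x w < 0)
  /\
  (* (b) *)
  (Rt 0 1 < Rc < Rt 0 0 ->
     (forall w, 0 < w < wD ->
        (forall x, 0 < x < xt w -> 0 < dg x w) /\
        (forall x, xt w < x < 1 -> dg x w < 0))
     /\
     (forall w, wD < w < 1 -> forall x, 0 < x < 1 -> dg x w < 0))
  /\
  (* (c) *)
  (Rc < Rt 0 1 ->
     (forall w, 0 < w < wC -> forall x, 0 < x < 1 -> 0 < dg x w)
     /\
     (forall w, wC < w < wD ->
        (forall x, 0 < x < xt w -> 0 < dg x w) /\
        (forall x, xt w < x < 1 -> dg x w < 0))
     /\
     (forall w, wD < w < 1 -> forall x, 0 < x < 1 -> dg x w < 0)).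
Proof.
  intros dg Rt Rc wC wD xt; subst dg Rt Rc wC wD xt.
  split; [| split].
  - intros H x w Hx Hw. apply dg_domega_neg_above_omegaD; auto.
    apply Rlt_trans with 0; [| lra].
    apply omega_i_lt_iff; try lra.
    rewrite <- R_tau_at_0. exact H.
  - intros _. split; intros w Hw.
    + apply dg_domega_sign_change_below_omegaD; auto; lra.
    + apply dg_domega_neg_above_omegaD; auto; lra.
  - intros H.
    assert (HtC' : 0 < tauC) by (eapply tauC_pos_of_R_c_lt_R_tau; eassumption).
    split; [| split]; intros w Hw.
    + apply dg_domega_pos_below_omegaC; auto; lra.
    + apply dg_domega_sign_change_below_omegaD; auto; lra.
    + apply dg_domega_neg_above_omegaD; auto; lra.
Qed.
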